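(* Let $A$ be a finite set and let $\rho\subseteq A^n$, $n\ge3$, be an essential key relation preserved by a semilattice operation or by a 2-semilattice operation on $A$. Then the pattern of $\rho$ is either the trivial equivalence relation, or an equivalence relation in which exactly one class has two elements and all other classes are singletons.
   Context: A semilattice operation is a binary associative, commutative, idempotent operation. A 2-semilattice operation is a binary commutative idempotent operation $s$ satisfying $s(x,s(x,y))=s(x,y)$. An operation preserves $\rho$ if applying it coordinatewise to tuples of $\rho$ gives a tuple of $\rho$. A unary vector-function is a tuple $\Psi=(\psi_1,\dots,\psi_n)$ of maps $\psi_i:A\to A$ acting coordinatewise; it preserves $\rho$ if $\Psi(\rho)\subseteq\rho$. $\rho$ is a key relation if there is $\beta\in A^n\setminus\rho$ (a key tuple) such that every $\alpha\in A^n\setminus\rho$ is mapped to $\beta$ by some unary vector-function preserving $\rho$. $\rho$ is essential if it cannot be written as a conjunction of relations of smaller arities. The pattern of $\rho$: for $i\ne j$, $i\overset{\rho}{\sim}j$ iff there do NOT exist $a_1,\dots,a_n,b_i,b_j\in A$ with $(a_1,\dots,a_n)\notin\rho$ while the tuples obtained by replacing $a_i$ by $b_i$, replacing $a_j$ by $b_j$, and replacing both, all lie in $\rho$; and $i\overset{\rho}{\sim}i$ always. *)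

From HB Require Import structures.
From mathcomp Require Import all_boot.
Set Implicit Arguments. Unset Strict Implicit. Unset Printing Implicit Defensive.

Notation tup A n := {ffun 'I_n -> A}.
Notation relation A n := {set tup A n}.

Definition semilattice_op (A : Type) (f : A -> A -> A) : Prop :=
  (forall x y z, f x (f y z) = f (f x y) z) /\
  (forall x y, f x y = f y x) /\ (forall x, f x x = x).

Definition two_semilattice_op (A : Type) (f : A -> A -> A) : Prop :=
  (forall x y, f x y = f y x) /\ (forall x, f x x = x) /\
  (forall x y, f x (f x y) = f x y).

Definition app2 (A : finType) n (f : A -> A -> A) (a b : tup A n) : tup A n :=
  [ffun i => f (a i) (b i)].

Definition preserves (A : finType) n (f : A -> A -> A) (rho : relation A n) : Prop :=
  forall a b, a \in rho -> b \in rho -> app2 f a b \in rho.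

Definition vapp (A : finType) n (Psi : 'I_n -> A -> A) (a : tup A n) : tup A n :=
  [ffun i => Psi i (a i)].

Definition vpreserves (A : finType) n (Psi : 'I_n -> A -> A) (rho : relation A n) : Prop :=
  forall a, a \in rho -> vapp Psi a \in rho.

Definition key_relation (A : finType) n (rho : relation A n) : Prop :=
  exists beta : tup A n, beta \notin rho /\
    forall alpha : tup A n, alpha \notin rho ->
      exists Psi : 'I_n -> A -> A, vpreserves Psi rho /\ vapp Psi alpha = beta.

(* a conjunct sigma(x_{s 0}, ..., x_{s (m-1)}) with m < n *)
Record conjunct (A : finType) (n : nat) := Conjunct {
  c_ar : nat;
  c_ar_lt : c_ar < n;
  c_vars : 'I_c_ar -> 'I_n;
  c_rel : relation A c_ar }.

Definition conj_holds (A : finType) n (c : conjunct A n) (a : tup A n) : bool :=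
  [ffun i => a (@c_vars A n c i)] \in @c_rel A n c.

Definition essential (A : finType) n (rho : relation A n) : Prop :=
  ~ exists cs : seq (conjunct A n),
      forall a : tup A n, (a \in rho) = all (fun c => conj_holds c a) cs.

Definition upd (A : finType) n (a : tup A n) (i : 'I_n) (b : A) : tup A n :=
  [ffun k => if k == i then b else a k].

Definition pattern (A : finType) n (rho : relation A n) (i j : 'I_n) : Prop :=
  i = j \/
  (i <> j /\ ~ exists (a : tup A n) (bi bj : A),
      [/\ a \notin rho, upd a i bi \in rho, upd a j bj \in rho
        & upd (upd a i bi) j bj \in rho]).

From HB Require Import structures.
From mathcomp Require Import all_boot.
From Stdlib Require Import Classical.
Set Implicit Arguments. Unset Strict Implicit. Unset Printing Implicit Defensive.

(* Essentiality gives a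
   tuple outside rho that can be repaired at every single coordinate, and the key
   tuple beta inherits this through the vector-function sending one to the other.
   Multiplying repairs with a 2-semilattice operation f, the absorption law
   f x (f x y) = f x y shows that a repair x of a tuple at j may be replaced by
   f x (beta j) whenever two other coordinates are related. Hence two related
   pairs cannot be disjoint; transporting beta along a vector-function that undoes
   a double repair of beta, they cannot share exactly one coordinate either. So at
   most one pair of distinct coordinates is related. *)

Lemma semilattice_two_semilattice_op (A : Type) (f : A -> A -> A) :
  semilattice_op f -> two_semilattice_op f.
Proof. by case=> fA [fC fI]; split; [|split] => // x y; rewrite fA fI. Qed.

Ltac upd_ext :=
  let t := fresh "t" in
  apply/ffunP => t; rewrite !ffunE;
  repeat match goal with H : is_true (_ != _) |- _ => move/eqP: H => H end;
  repeat (case: eqP => [?|?]; subst); by [].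

Section Updates.
Variables (A : finType) (n : nat).
Implicit Types (a : tup A n) (i j : 'I_n) (x y : A).

Lemma updC a i j x y : i != j -> upd (upd a i x) j y = upd (upd a j y) i x.
Proof. by move=> ij; upd_ext. Qed.

Lemma upd_upd a i x y : upd (upd a i x) i y = upd a i y.
Proof. by upd_ext. Qed.

Lemma upd_id a i : upd a i (a i) = a.
Proof. by upd_ext. Qed.

Lemma vapp_upd (Psi : 'I_n -> A -> A) a i x :
  vapp Psi (upd a i x) = upd (vapp Psi a) i (Psi i x).
Proof. by upd_ext. Qed.

Lemma app2_upd (f : A -> A -> A) a i j x y : (forall z, f z z = z) -> i != j ->
  app2 f (upd a i x) (upd a j y) = upd (upd a i (f x (a i))) j (f (a j) y).
Proof. by move=> fI ij; upd_ext. Qed.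

End Updates.

Section Pattern.
Variables (A : finType) (n : nat) (rho : relation A n).
Implicit Types (a beta : tup A n) (i j k : 'I_n) (x y : A).

Definition pattern_witness i j : Prop :=
  exists a bi bj, [/\ a \notin rho, upd a i bi \in rho, upd a j bj \in rho
                    & upd (upd a i bi) j bj \in rho].

Lemma pattern_witnessC i j : i != j -> pattern_witness i j -> pattern_witness j i.
Proof. by move=> ij [a [x [y [Ha Hi Hj Hij]]]]; exists a, y, x; rewrite -updC. Qed.

Lemma no_pattern_witnessC i j :
  i != j -> ~ pattern_witness i j -> ~ pattern_witness j i.
Proof. by move=> ij noW /pattern_witnessC; rewrite eq_sym => /(_ ij). Qed.

Lemma no_pattern_witness_mem i j a x y : ~ pattern_witness i j ->
  upd a i x \in rho -> upd a j y \in rho -> upd (upd a i x) j y \in rho -> a \in rho.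
Proof. by move=> noW Hi Hj Hij; apply/negPn/negP => Ha; apply: noW; exists a, x, y. Qed.

Definition repairable a : Prop := forall i, exists x, upd a i x \in rho.

Definition key_tuple beta : Prop :=
  beta \notin rho /\ forall alpha, alpha \notin rho ->
    exists Psi : 'I_n -> A -> A, vpreserves Psi rho /\ vapp Psi alpha = beta.

Lemma key_tuple_repairable beta a :
  key_tuple beta -> a \notin rho -> repairable a -> repairable beta.
Proof.
move=> [_ beta_key] Ha a_rep i; have [Psi [Psi_rho <-]] := beta_key a Ha.
by have [x Hx] := a_rep i; exists (Psi i x); rewrite -vapp_upd; apply: Psi_rho.
Qed.

Lemma key_transport beta i j k : key_tuple beta -> repairable beta ->
  uniq [:: i; j; k] -> ~ pattern_witness i j ->
  exists x y z, [/\ upd beta i x \in rho, upd beta j y \in rho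
                   & upd (upd (upd beta i x) j y) k z \in rho].
Proof.
move=> [beta_out beta_key] beta_rep; rewrite /= !inE negb_or andbT.
case/andP=> /andP[ij ik] jk noW.
have [u Hu] := beta_rep i; have [v Hv] := beta_rep j; have [w Hw] := beta_rep k.
have delta_out : upd (upd beta i u) j v \notin rho.
  by apply: contra beta_out; apply: no_pattern_witness_mem noW Hu Hv.
have [Psi [Psi_rho Psi_delta]] := beta_key _ delta_out.
exists (Psi i (beta i)), (Psi j (beta j)), (Psi k w).
split; rewrite -{1}Psi_delta -!vapp_upd; apply: Psi_rho.
- by have -> : upd (upd (upd beta i u) j v) i (beta i) = upd beta j v by upd_ext.
- by have -> : upd (upd (upd beta i u) j v) j (beta j) = upd beta i u by upd_ext.
by have -> : upd (upd (upd (upd (upd beta i u) j v) i (beta i)) j (beta j)) k w =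
              upd beta k w by upd_ext.
Qed.

Section Projections.
Hypothesis n_gt0 : 0 < n.
Let pred_ltn : n.-1 < n. Proof. by rewrite ltn_predL. Qed.

Definition drop_conjunct i : conjunct A n :=
  @Conjunct A n n.-1 pred_ltn (lift i)
    [set [ffun k => (r : tup A n) (lift i k)] | r in rho].

Lemma drop_conjunctP a i :
  reflect (exists x, upd a i x \in rho) (conj_holds (drop_conjunct i) a).
Proof.
apply: (iffP imsetP) => [[r Hr Hra]|[x Hx]]; last first.
  by exists (upd a i x) => //; apply/ffunP => k; rewrite !ffunE lift_eqF.
exists (r i); suff -> : upd a i (r i) = r by [].
apply/ffunP => k; rewrite ffunE; case: (unliftP i k) => [l ->|->]; last by rewrite eqxx.
by rewrite lift_eqF; have := congr1 (fun g : tup A n.-1 => g l) Hra; rewrite !ffunE.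
Qed.

(* Otherwise rho is the conjunction of its n projections of arity n - 1. *)
Lemma essential_repairable : essential rho -> exists a, a \notin rho /\ repairable a.
Proof.
move=> rho_ess; apply: NNPP => no_rep; apply: rho_ess.
exists [seq drop_conjunct i | i <- enum 'I_n] => a; rewrite all_map.
apply/idP/allP => [Ha i _ | Hall]; first by apply/drop_conjunctP; exists (a i); rewrite upd_id.
apply/negPn/negP => Ha; apply: no_rep; exists a; split=> // i.
exact/drop_conjunctP/Hall/mem_enum.
Qed.

End Projections.

Section TwoSemilattice.
Variable f : A -> A -> A.
Hypothesis f_2sl : two_semilattice_op f.
Hypothesis f_rho : preserves f rho.

Let fC : forall x y, f x y = f y x. Proof. by case: f_2sl. Qed.
Let fI : forall x, f x x = x. Proof. by case: f_2sl => _ []. Qed.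
Let fK : forall x y, f x (f x y) = f x y. Proof. by case: f_2sl => _ []. Qed.

(* Multiplying the repair at j with those at i, at k, and at both yields
   upd a j (f x (a j)) repaired at i, at k, and at both. *)
Lemma repair_absorb a i j k x y z :
  i != j -> j != k -> i != k -> ~ pattern_witness i k ->
  upd a i y \in rho -> upd a k z \in rho -> upd a j x \in rho ->
  upd a j (f x (a j)) \in rho.
Proof.
move=> ij jk ik noW Hi Hk Hj.
have ji : j != i by rewrite eq_sym.
apply: (no_pattern_witness_mem (x := f (a i) y) (y := f (a k) z) noW).
- by have := f_rho Hj Hi; rewrite app2_upd.
- by have := f_rho Hj Hk; rewrite app2_upd.
have := f_rho (f_rho Hj Hi) Hk.
suff -> : app2 f (app2 f (upd a j x) (upd a i y)) (upd a k z) =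
  upd (upd (upd a j (f x (a j))) i (f (a i) y)) k (f (a k) z) by [].
apply/ffunP => t; rewrite !ffunE.
have [->|tk] := eqVneq t k; first by rewrite eq_sym (negbTE jk) eq_sym (negbTE ik) fI.
have [->|ti] := eqVneq t i; first by rewrite (negbTE ij) fC fK.
have [->|tj] := eqVneq t j; first by rewrite [f x _]fC [f (f _ _) _]fC fK.
by rewrite !fI.
Qed.

Variable beta : tup A n.
Hypothesis beta_out : beta \notin rho.
Hypothesis beta_rep : repairable beta.

Lemma pattern_witness_disjoint i j k l :
  uniq [:: i; j; k; l] -> ~ pattern_witness k l -> pattern_witness i j.
Proof.
rewrite /= !inE !negb_or -!andbA andbT => /and3P[ij ik /and4P[il jk jl kl]] noW.
have [u Hu] := beta_rep i; have [v Hv] := beta_rep j.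
have [w Hw] := beta_rep k; have [z Hz] := beta_rep l.
exists beta, (f u (beta i)), (f (beta j) v); split=> //.
- by apply: (repair_absorb _ il kl noW Hw Hz Hu); rewrite eq_sym.
- by rewrite fC; apply: (repair_absorb _ jl kl noW Hw Hz Hv); rewrite eq_sym.
- by rewrite -app2_upd //; apply: f_rho.
Qed.

Lemma pattern_witness_shared i j k : key_tuple beta ->
  uniq [:: i; j; k] -> ~ pattern_witness i j -> pattern_witness i k.
Proof.
move=> beta_key ijk noWij; apply: NNPP => noWik.
move: (ijk); rewrite /= !inE negb_or andbT => /andP[/andP[ij ik] jk].
have [x [y [z [Hx Hy Hz]]]] := key_transport beta_key beta_rep ijk noWij.
have [u Hu] := beta_rep i; have [w Hw] := beta_rep k.
have Hxy : upd (upd beta i (f x (beta i))) j (f (beta j) y) \in rho.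
  by rewrite -app2_upd //; apply: f_rho.
have Hy_abs : upd beta j (f (beta j) y) \in rho.
  by rewrite fC; apply: (repair_absorb ij jk ik noWik Hu Hw Hy).
set kappa := upd (upd beta i x) j y.
have Hkappa_j : upd kappa j (f (beta j) y) \in rho.
  have := @repair_absorb kappa i j k (beta j) (beta i) z.
  rewrite [kappa j]ffunE eqxx; apply=> //; rewrite /kappa.
  - by have -> : upd (upd (upd beta i x) j y) i (beta i) = upd beta j y by upd_ext.
  - by have -> : upd (upd (upd beta i x) j y) j (beta j) = upd beta i x by upd_ext.
(* As i and j are related, a tuple repaired at i, at j and at both lies in rho;
   this applies in turn to the two tuples below and then to beta. *)
have Hx_abs : upd (upd beta i (f x (beta i))) j y \in rho.
  apply: (no_pattern_witness_mem (x := beta i) (y := f (beta j) y) noWij).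
  - by have -> : upd (upd (upd beta i (f x (beta i))) j y) i (beta i) = upd beta j y
      by upd_ext.
  - by rewrite upd_upd.
  by have -> : upd (upd (upd (upd beta i (f x (beta i))) j y) i (beta i)) j
                   (f (beta j) y) = upd beta j (f (beta j) y) by upd_ext.
have Hkappa : kappa \in rho.
  apply: (no_pattern_witness_mem (x := f x (beta i)) (y := f (beta j) y) noWij) => //;
    rewrite /kappa.
  - by have -> : upd (upd (upd beta i x) j y) i (f x (beta i)) =
                   upd (upd beta i (f x (beta i))) j y by upd_ext.
  by have -> : upd (upd (upd (upd beta i x) j y) i (f x (beta i))) j (f (beta j) y) =
                 upd (upd beta i (f x (beta i))) j (f (beta j) y) by upd_ext.
by move/negP: beta_out; apply; apply: (no_pattern_witness_mem noWij Hx Hy).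
Qed.

Lemma pattern_witness_unique i j k l : key_tuple beta -> i != j ->
  ~ pattern_witness i j -> k != l -> ~ pattern_witness k l ->
  (k = i /\ l = j) \/ (k = j /\ l = i).
Proof.
move=> beta_key ij noWij.
have noWji := no_pattern_witnessC ij noWij.
have shared := pattern_witness_shared beta_key.
have [-> | ki] := eqVneq k i.
  have [-> | lj] := eqVneq l j; first by left.
  move=> il []; apply: (shared _ _ _ _ noWij).
  by rewrite /= !inE negb_or ij il eq_sym lj.
have [-> | kj] := eqVneq k j.
  have [-> | li] := eqVneq l i; first by right.
  move=> jl []; apply: (shared _ _ _ _ noWji).
  by rewrite /= !inE negb_or eq_sym ij jl eq_sym li.
have [-> | li] := eqVneq l i.
  move=> ki' /(no_pattern_witnessC ki') []; apply: (shared _ _ _ _ noWij).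
  by rewrite /= !inE negb_or ij eq_sym ki eq_sym kj.
have [-> | lj] := eqVneq l j.
  move=> kj' /(no_pattern_witnessC kj') []; apply: (shared _ _ _ _ noWji).
  by rewrite /= !inE negb_or eq_sym ij eq_sym kj eq_sym ki.
move=> kl []; apply: (pattern_witness_disjoint _ noWij).
by rewrite /= !inE !negb_or kl ki kj li lj ij.
Qed.

End TwoSemilattice.

End Pattern.

Theorem mainTheorem10 (A : finType) (n : nat) (rho : {set {ffun 'I_n -> A}}) :
  3 <= n ->
  essential rho ->
  key_relation rho ->
  (exists f : A -> A -> A,
     (semilattice_op f \/ two_semilattice_op f) /\ preserves f rho) ->
  (forall i j : 'I_n, pattern rho i j <-> i = j) \/
  (exists i j : 'I_n, i <> j /\
     forall k l : 'I_n,
       pattern rho k l <->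
       (k = l \/ (k = i /\ l = j) \/ (k = j /\ l = i))).
Proof.
move=> n_ge3 rho_ess [beta beta_key] [f [f_op f_rho]].
have f_2sl : two_semilattice_op f.
  by case: f_op => [/semilattice_two_semilattice_op|].
have [a [a_out a_rep]] := essential_repairable (leq_trans (isT : 0 < 3) n_ge3) rho_ess.
have beta_rep := key_tuple_repairable beta_key a_out a_rep.
have unique := pattern_witness_unique f_2sl f_rho beta_key.1 beta_rep beta_key.
have [[i [j [ij noWij]]] | noW] :=
  classic (exists i j : 'I_n, i != j /\ ~ pattern_witness rho i j); last first.
  left=> i j; split=> [[// | [/eqP ij noWij]] | ->]; last by left.
  by case: noW; exists i, j.
right; exists i, j; split=> [/eqP|k l]; first by rewrite (negbTE ij).
split=> [[-> | [/eqP kl noWkl]] | [-> | [[-> ->] | [-> ->]]]]; first by left.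
- by right; apply: unique.
- by left.
- by right; split=> // /eqP; rewrite (negbTE ij).
right; split=> [/eqP|]; first by rewrite eq_sym (negbTE ij).
exact: no_pattern_witnessC.
Qed.
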